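(* Let $\Gamma$ and $\Delta$ be finite subsets of ${\sf Frm}$. If the sequent $\Gamma\Rightarrow\Delta$ is derivable in ${\sf GWF_{N_2}}$, then $\vdash_{\sf WF_{N_2}}\bigwedge\Gamma\rightarrow\bigvee\Delta$.
   Context: Language: countably many atoms $p,q,\dots$, the constant $\bot$, and binary connectives $\wedge,\vee,\rightarrow$ ($\rightarrow$ is strict implication). ${\sf Frm}$ is the set of formulas built from atoms and $\bot$ with $\wedge,\vee,\rightarrow$; $A,B,C,D$ range over ${\sf Frm}$. Let $\supset$ be a new binary symbol (material implication) and ${\sf Frm_1}={\sf Frm}\cup\{A\supset B : A,B\in{\sf Frm}\}$ (no nesting of $\supset$). ${\sf Frm_2}$ is the smallest set containing ${\sf Frm_1}$ and closed under $\wedge$ and $\vee$; $X,Y$ range over ${\sf Frm_2}$. A sequent is $\Gamma\Rightarrow\Delta$ with $\Gamma,\Delta$ finite multisets of ${\sf Frm_2}$-formulas. The calculus ${\sf GWF_{N_2}}$ has initial sequents $(id)$ $p,\Gamma\Rightarrow\Delta,p$ ($p$ an atom) and $(L_\bot)$ $\bot,\Gamma\Rightarrow\Delta$, and rules (premises / conclusion): $(L_\wedge)$ $X,Y,\Gamma\Rightarrow\Delta$ / $X\wedge Y,\Gamma\Rightarrow\Delta$; $(R_\wedge)$ $\Gamma\Rightarrow\Delta,X$ and $\Gamma\Rightarrow\Delta,Y$ / $\Gamma\Rightarrow\Delta,X\wedge Y$; $(L_\vee)$ $X,\Gamma\Rightarrow\Delta$ and $Y,\Gamma\Rightarrow\Delta$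 / $X\vee Y,\Gamma\Rightarrow\Delta$; $(R_\vee)$ $\Gamma\Rightarrow\Delta,X,Y$ / $\Gamma\Rightarrow\Delta,X\vee Y$; $(L_\supset)$ $\Gamma\Rightarrow\Delta,A$ and $B,\Gamma\Rightarrow\Delta$ / $A\supset B,\Gamma\Rightarrow\Delta$; $(R_\supset)$ $A,\Gamma\Rightarrow\Delta,B$ / $\Gamma\Rightarrow\Delta,A\supset B$; $(LR_\rightarrow)$ $C\supset D,A\Rightarrow B$ / $\Gamma,C\rightarrow D\Rightarrow\Delta,A\rightarrow B$; $(R_\rightarrow)$ $A\Rightarrow B$ / $\Gamma\Rightarrow\Delta,A\rightarrow B$. Here $A,B,C,D\in{\sf Frm}$, $X,Y\in{\sf Frm_2}$, and $\Gamma,\Delta$ are arbitrary finite multisets of ${\sf Frm_2}$-formulas. The Hilbert system ${\sf WF_{N_2}}$ over ${\sf Frm}$ has axiom schemes $A\rightarrow(A\vee B)$; $B\rightarrow(A\vee B)$; $(A\wedge B)\rightarrow A$; $(A\wedge B)\rightarrow B$; $A\wedge(B\vee C)\rightarrow(A\wedge B)\vee(A\wedge C)$; $A\rightarrow A$; $\bot\rightarrow A$; and rules (from theorems to a theorem): from $A$ and $A\rightarrow B$ infer $B$; from $A$ infer $B\rightarrow A$; from $A\rightarrow B$ and $B\rightarrow C$ infer $A\rightarrow C$; from $A\rightarrow B$ and $A\rightarrow C$ infer $A\rightarrow(B\wedge C)$; from $A\rightarrow C$ and $B\rightarrow C$ infer $(A\vee B)\rightarrow C$; from $A$ and $B$ infer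 $A\wedge B$; (${\sf N_2}$) from $C\rightarrow A\vee D$ and $C\wedge B\rightarrow D$ infer $(A\rightarrow B)\rightarrow(C\rightarrow D)$. $\vdash_{\sf WF_{N_2}}A$ means $A$ is a theorem of this system. $\bigwedge\Gamma$ and $\bigvee\Delta$ denote the conjunction and disjunction of the members of $\Gamma$, resp. $\Delta$ (with the empty conjunction read as $\top:=\bot\rightarrow\bot$ and the empty disjunction as $\bot$). *)

From Stdlib Require Import List Permutation.
Import ListNotations.

Inductive frm : Type :=
| Atom : nat -> frm
| Bot : frm
| And : frm -> frm -> frm
| Or : frm -> frm -> frm
| Imp : frm -> frm -> frm.   (* strict implication -> *)

(* Frm2: smallest set containing Frm1 = Frm ∪ {A ⊃ B : A,B ∈ Frm} and
   closed under ∧, ∨.  Since Frm ⊆ Frm2 with the SAME ∧, ∨, we represent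
   Frm2 so that each element has a unique representation: atoms, ⊥,
   strict implications A → B (A,B ∈ Frm), material implications A ⊃ B,
   and ∧, ∨ over Frm2.  [F] is the inclusion Frm ⊆ Frm2. *)
Inductive frm2 : Type :=
| Atom2 : nat -> frm2
| Bot2 : frm2
| SImp2 : frm -> frm -> frm2
| MImp : frm -> frm -> frm2
| And2 : frm2 -> frm2 -> frm2
| Or2 : frm2 -> frm2 -> frm2.

Fixpoint F (A : frm) : frm2 :=
  match A with
  | Atom p => Atom2 p
  | Bot => Bot2
  | And A B => And2 (F A) (F B)
  | Or A B => Or2 (F A) (F B)
  | Imp A B => SImp2 A B
  end.

(* Sequents Γ ⇒ Δ with Γ, Δ finite multisets, represented as lists
   identified up to permutation (rule [g_perm]). *)
Inductive GWFN2 : list frm2 -> list frm2 -> Prop :=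
| g_perm : forall G G' D D', Permutation G G' -> Permutation D D' ->
    GWFN2 G D -> GWFN2 G' D'
| g_id : forall p G D, GWFN2 (F (Atom p) :: G) (F (Atom p) :: D)
| g_Lbot : forall G D, GWFN2 (F Bot :: G) D
| g_Land : forall X Y G D, GWFN2 (X :: Y :: G) D -> GWFN2 (And2 X Y :: G) D
| g_Rand : forall X Y G D, GWFN2 G (X :: D) -> GWFN2 G (Y :: D) ->
    GWFN2 G (And2 X Y :: D)
| g_Lor : forall X Y G D, GWFN2 (X :: G) D -> GWFN2 (Y :: G) D ->
    GWFN2 (Or2 X Y :: G) D
| g_Ror : forall X Y G D, GWFN2 G (X :: Y :: D) -> GWFN2 G (Or2 X Y :: D)
| g_Lmimp : forall A B G D, GWFN2 G (F A :: D) -> GWFN2 (F B :: G) D ->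
    GWFN2 (MImp A B :: G) D
| g_Rmimp : forall A B G D, GWFN2 (F A :: G) (F B :: D) ->
    GWFN2 G (MImp A B :: D)
| g_LRimp : forall A B C D' G D, GWFN2 [MImp C D'; F A] [F B] ->
    GWFN2 (F (Imp C D') :: G) (F (Imp A B) :: D)
| g_Rimp : forall A B G D, GWFN2 [F A] [F B] -> GWFN2 G (F (Imp A B) :: D).


Inductive WFN2 : frm -> Prop :=
| ax_or1 : forall A B, WFN2 (Imp A (Or A B))
| ax_or2 : forall A B, WFN2 (Imp B (Or A B))
| ax_and1 : forall A B, WFN2 (Imp (And A B) A)
| ax_and2 : forall A B, WFN2 (Imp (And A B) B)
| ax_dist : forall A B C, WFN2 (Imp (And A (Or B C)) (Or (And A B) (And A C)))
| ax_id : forall A, WFN2 (Imp A A)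
| ax_bot : forall A, WFN2 (Imp Bot A)
| r_mp : forall A B, WFN2 A -> WFN2 (Imp A B) -> WFN2 B
| r_k : forall A B, WFN2 A -> WFN2 (Imp B A)
| r_trans : forall A B C, WFN2 (Imp A B) -> WFN2 (Imp B C) -> WFN2 (Imp A C)
| r_conj : forall A B C, WFN2 (Imp A B) -> WFN2 (Imp A C) -> WFN2 (Imp A (And B C))
| r_disj : forall A B C, WFN2 (Imp A C) -> WFN2 (Imp B C) -> WFN2 (Imp (Or A B) C)
| r_and : forall A B, WFN2 A -> WFN2 B -> WFN2 (And A B)
| r_N2 : forall A B C D, WFN2 (Imp C (Or A D)) -> WFN2 (Imp (And C B) D) ->
    WFN2 (Imp (Imp A B) (Imp C D)).

Definition Top : frm := Imp Bot Bot.

Fixpoint bigAnd (l : list frm) : frm :=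
  match l with
  | [] => Top
  | [A] => A
  | A :: l' => And A (bigAnd l')
  end.

Fixpoint bigOr (l : list frm) : frm :=
  match l with
  | [] => Bot
  | [A] => A
  | A :: l' => Or A (bigOr l')
  end.

(** The Hilbert-style reading of a sequent [N ⇒ P] of [Frm]-formulas is
    [entails N P]: every formula below all of [N] implies every formula above
    all of [P].  A material implication [A ⊃ B] cannot be read this way, so it
    is resolved classically: on the left either [A] joins the succedent or [B]
    joins the antecedent, on the right [A] joins the antecedent and [B] the
    succedent.  Each rule of [GWF_N2] preserves "every resolution entails";
    the only genuinely modal rule [(LR_→)] is discharged by [(N_2)], since
    resolving its premise [C ⊃ D, A ⇒ B] in the two possible ways yields
    exactly the two premises [A → C ∨ B] and [A ∧ D → B] of [(N_2)]. *)

From Stdlib Require Import List Permutation.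
Import ListNotations.

Lemma imp_by_cases X Y Z W :
  WFN2 (Imp X (Or Y Z)) -> WFN2 (Imp (And X Y) W) -> WFN2 (Imp (And X Z) W) ->
  WFN2 (Imp X W).
Proof.
  intros hYZ hY hZ.
  eapply r_trans; [apply r_conj; [apply ax_id | exact hYZ]|].
  eapply r_trans; [apply ax_dist | apply r_disj; assumption].
Qed.

Lemma bigAnd_proj l a : In a l -> WFN2 (Imp (bigAnd l) a).
Proof.
  induction l as [|x [|y l] IH]; [intros []| |].
  - intros [<-|[]]; apply ax_id.
  - intros [<-|h]; [apply ax_and1|].
    eapply r_trans; [apply ax_and2 | auto].
Qed.

Lemma bigOr_inj l b : In b l -> WFN2 (Imp b (bigOr l)).
Proof.
  induction l as [|x [|y l] IH]; [intros []| |].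
  - intros [<-|[]]; apply ax_id.
  - intros [<-|h]; [apply ax_or1|].
    eapply r_trans; [apply IH, h | apply ax_or2].
Qed.

Definition entails (N P : list frm) : Prop :=
  forall C D, (forall a, In a N -> WFN2 (Imp C a)) ->
              (forall b, In b P -> WFN2 (Imp b D)) -> WFN2 (Imp C D).

Lemma entails_bigAnd_bigOr N P : entails N P -> WFN2 (Imp (bigAnd N) (bigOr P)).
Proof. intros h; apply h; [apply bigAnd_proj | apply bigOr_inj]. Qed.

Lemma entails_shared a N P : In a N -> In a P -> entails N P.
Proof. intros hN hP C D hC hD; eapply r_trans; eauto. Qed.

Lemma entails_bot N P : In Bot N -> entails N P.
Proof. intros h C D hC _; eapply r_trans; [apply hC, h | apply ax_bot]. Qed.

Lemma entails_andL A B N P : In (And A B) N -> entails (A :: B :: N) P -> entails N P.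
Proof.
  intros hAB h C D hC hD; apply h; auto.
  intros a [<-|[<-|ha]]; auto; (eapply r_trans; [apply hC, hAB|]).
  - apply ax_and1.
  - apply ax_and2.
Qed.

Lemma entails_orR A B N P : In (Or A B) P -> entails N (A :: B :: P) -> entails N P.
Proof.
  intros hAB h C D hC hD; apply h; auto.
  intros b [<-|[<-|hb]]; auto; (eapply r_trans; [|apply hD, hAB]).
  - apply ax_or1.
  - apply ax_or2.
Qed.

Lemma entails_orL A B N P :
  In (Or A B) N -> entails (A :: N) P -> entails (B :: N) P -> entails N P.
Proof.
  intros hAB hA hB C D hC hD.
  assert (hCN : forall E a, In a N -> WFN2 (Imp (And C E) a))
    by (intros E a ha; eapply r_trans; [apply ax_and1 | auto]).
  apply (imp_by_cases C A B D); [apply hC, hAB | apply hA | apply hB]; auto;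
    intros a [<-|ha]; auto; apply ax_and2.
Qed.

Lemma entails_andR A B N P :
  In (And A B) P -> entails N (A :: P) -> entails N (B :: P) -> entails N P.
Proof.
  intros hAB hA hB C D hC hD.
  assert (hPD : forall E b, In b P -> WFN2 (Imp b (Or E D)))
    by (intros E b hb; eapply r_trans; [apply hD, hb | apply ax_or2]).
  assert (hCA : WFN2 (Imp C (Or A D)))
    by (apply hA; auto; intros b [<-|hb]; auto; apply ax_or1).
  assert (hCAB : WFN2 (Imp (And C A) (Or B D))).
  { apply hB; [intros a ha; eapply r_trans; [apply ax_and1 | auto]|].
    intros b [<-|hb]; auto; apply ax_or1. }
  apply (imp_by_cases C A D D); [exact hCA | | apply ax_and2].
  apply (imp_by_cases (And C A) B D D); [exact hCAB | | apply ax_and2].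
  eapply r_trans; [|apply hD, hAB].
  apply r_conj; [eapply r_trans; [apply ax_and1 | apply ax_and2] | apply ax_and2].
Qed.

Lemma F_inj A B : F A = F B -> A = B.
Proof.
  revert B; induction A; intros []; simpl; intro h; try discriminate;
    try reflexivity; injection h; intros; subst; f_equal; auto.
Qed.

Lemma in_map_F A N : In (F A) (map F N) <-> In A N.
Proof.
  split; [|apply in_map].
  intros (B & eB & hB)%in_map_iff; apply F_inj in eB; subst; exact hB.
Qed.

Lemma in_map_F_And2 X Y N :
  In (And2 X Y) (map F N) -> exists A B, X = F A /\ Y = F B /\ In (And A B) N.
Proof.
  intros (C & eC & hC)%in_map_iff.
  destruct C; try discriminate; injection eC as <- <-; eauto.
Qed.

Lemma in_map_F_Or2 X Y N :
  In (Or2 X Y) (map F N) -> exists A B, X = F A /\ Y = F B /\ In (Or A B) N.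
Proof.
  intros (C & eC & hC)%in_map_iff.
  destruct C; try discriminate; injection eC as <- <-; eauto.
Qed.

Definition coverL (N P : list frm) (X : frm2) : Prop :=
  match X with
  | MImp A B => In A P \/ In B N
  | _ => In X (map F N)
  end.

Definition coverR (N P : list frm) (X : frm2) : Prop :=
  match X with
  | MImp A B => In A N /\ In B P
  | _ => In X (map F P)
  end.

Lemma coverL_F N P A : coverL N P (F A) <-> In A N.
Proof. rewrite <- in_map_F; destruct A; reflexivity. Qed.

Lemma coverR_F N P A : coverR N P (F A) <-> In A P.
Proof. rewrite <- in_map_F; destruct A; reflexivity. Qed.

Lemma Forall_coverL_incl N P N' P' G :
  incl N N' -> incl P P' -> Forall (coverL N P) G -> Forall (coverL N' P') G.
Proof.
  intros hN hP; apply Forall_impl.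
  intros []; simpl; try apply (incl_map F hN); intros [h|h]; auto.
Qed.

Lemma Forall_coverR_incl N P N' P' D :
  incl N N' -> incl P P' -> Forall (coverR N P) D -> Forall (coverR N' P') D.
Proof.
  intros hN hP; apply Forall_impl.
  intros []; simpl; try apply (incl_map F hP); intros [h h']; auto.
Qed.

Definition valid2 (G D : list frm2) : Prop :=
  forall N P, Forall (coverL N P) G -> Forall (coverR N P) D -> entails N P.

Lemma valid2_perm G G' D D' :
  Permutation G G' -> Permutation D D' -> valid2 G D -> valid2 G' D'.
Proof.
  intros pG pD h N P hG hD; apply h.
  - eapply Permutation_Forall; [apply Permutation_sym, pG | exact hG].
  - eapply Permutation_Forall; [apply Permutation_sym, pD | exact hD].
Qed.

Lemma valid2_id p G D : valid2 (F (Atom p) :: G) (F (Atom p) :: D).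
Proof.
  intros N P [hG _]%Forall_cons_iff [hD _]%Forall_cons_iff.
  apply (entails_shared (Atom p)); [apply coverL_F in hG | apply coverR_F in hD]; auto.
Qed.

Lemma valid2_Lbot G D : valid2 (F Bot :: G) D.
Proof. intros N P [h _]%Forall_cons_iff _; apply entails_bot, (coverL_F N P), h. Qed.

Lemma valid2_Land X Y G D : valid2 (X :: Y :: G) D -> valid2 (And2 X Y :: G) D.
Proof.
  intros h N P [hXY hG]%Forall_cons_iff hD.
  destruct (in_map_F_And2 _ _ _ hXY) as (A & B & -> & -> & hAB).
  apply (entails_andL A B); [exact hAB|]; apply h.
  - repeat constructor; try (apply coverL_F; simpl; auto).
    eapply Forall_coverL_incl; [| |exact hG]; auto with datatypes.
  - eapply Forall_coverR_incl; [| |exact hD]; auto with datatypes.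
Qed.

Lemma valid2_Rand X Y G D :
  valid2 G (X :: D) -> valid2 G (Y :: D) -> valid2 G (And2 X Y :: D).
Proof.
  intros hX hY N P hG [hXY hD]%Forall_cons_iff.
  destruct (in_map_F_And2 _ _ _ hXY) as (A & B & -> & -> & hAB).
  assert (hD' : forall E, Forall (coverR N (E :: P)) D)
    by (intro E; eapply Forall_coverR_incl; [| |exact hD]; auto with datatypes).
  assert (hG' : forall E, Forall (coverL N (E :: P)) G)
    by (intro E; eapply Forall_coverL_incl; [| |exact hG]; auto with datatypes).
  apply (entails_andR A B); [exact hAB | apply hX | apply hY]; auto;
    constructor; auto; apply coverR_F; simpl; auto.
Qed.

Lemma valid2_Lor X Y G D :
  valid2 (X :: G) D -> valid2 (Y :: G) D -> valid2 (Or2 X Y :: G) D.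
Proof.
  intros hX hY N P [hXY hG]%Forall_cons_iff hD.
  destruct (in_map_F_Or2 _ _ _ hXY) as (A & B & -> & -> & hAB).
  assert (hG' : forall E, Forall (coverL (E :: N) P) G)
    by (intro E; eapply Forall_coverL_incl; [| |exact hG]; auto with datatypes).
  assert (hD' : forall E, Forall (coverR (E :: N) P) D)
    by (intro E; eapply Forall_coverR_incl; [| |exact hD]; auto with datatypes).
  apply (entails_orL A B); [exact hAB | apply hX | apply hY]; auto;
    constructor; auto; apply coverL_F; simpl; auto.
Qed.

Lemma valid2_Ror X Y G D : valid2 G (X :: Y :: D) -> valid2 G (Or2 X Y :: D).
Proof.
  intros h N P hG [hXY hD]%Forall_cons_iff.
  destruct (in_map_F_Or2 _ _ _ hXY) as (A & B & -> & -> & hAB).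
  apply (entails_orR A B); [exact hAB|]; apply h.
  - eapply Forall_coverL_incl; [| |exact hG]; auto with datatypes.
  - repeat constructor; try (apply coverR_F; simpl; auto).
    eapply Forall_coverR_incl; [| |exact hD]; auto with datatypes.
Qed.

Lemma valid2_Lmimp A B G D :
  valid2 G (F A :: D) -> valid2 (F B :: G) D -> valid2 (MImp A B :: G) D.
Proof.
  intros hA hB N P [[hAP|hBN] hG]%Forall_cons_iff hD.
  - apply hA; auto; constructor; [apply coverR_F|]; auto.
  - apply hB; auto; constructor; [apply coverL_F|]; auto.
Qed.

Lemma valid2_Rmimp A B G D :
  valid2 (F A :: G) (F B :: D) -> valid2 G (MImp A B :: D).
Proof.
  intros h N P hG [[hAN hBP] hD]%Forall_cons_iff.
  apply h; constructor; auto; [apply coverL_F | apply coverR_F]; auto.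
Qed.

Lemma valid2_LRimp A B C D' G D :
  valid2 [MImp C D'; F A] [F B] -> valid2 (F (Imp C D') :: G) (F (Imp A B) :: D).
Proof.
  intros h N P [hCD _]%Forall_cons_iff [hAB _]%Forall_cons_iff.
  apply coverL_F in hCD; apply coverR_F in hAB.
  assert (hACB : WFN2 (Imp A (Or C B))).
  { apply (entails_bigAnd_bigOr [A] [C; B]), h.
    - constructor; [simpl; auto|]; constructor; [apply coverL_F; simpl|]; auto.
    - constructor; [apply coverR_F; simpl|]; auto. }
  assert (hADB : WFN2 (Imp (And A D') B)).
  { apply (entails_bigAnd_bigOr [A; D'] [B]), h.
    - constructor; [simpl; auto|]; constructor; [apply coverL_F; simpl|]; auto.
    - constructor; [apply coverR_F; simpl|]; auto. }
  intros E E' hE hE'.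
  eapply r_trans; [apply hE, hCD|].
  eapply r_trans; [apply r_N2; eassumption | apply hE', hAB].
Qed.

Lemma valid2_Rimp A B G D : valid2 [F A] [F B] -> valid2 G (F (Imp A B) :: D).
Proof.
  intros h N P _ [hAB _]%Forall_cons_iff; apply coverR_F in hAB.
  assert (hAimpB : WFN2 (Imp A B)).
  { apply (entails_bigAnd_bigOr [A] [B]), h;
      constructor; auto; [apply coverL_F | apply coverR_F]; simpl; auto. }
  intros E E' _ hE'.
  eapply r_trans; [apply r_k, hAimpB | apply hE', hAB].
Qed.

Lemma GWFN2_valid2 G D : GWFN2 G D -> valid2 G D.
Proof.
  induction 1; eauto using valid2_perm, valid2_id, valid2_Lbot, valid2_Land,
    valid2_Rand, valid2_Lor, valid2_Ror, valid2_Lmimp, valid2_Rmimp,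
    valid2_LRimp, valid2_Rimp.
Qed.

Theorem theorem3p10 (Gamma Delta : list frm) :
  NoDup Gamma -> NoDup Delta ->
  GWFN2 (map F Gamma) (map F Delta) ->
  WFN2 (Imp (bigAnd Gamma) (bigOr Delta)).
Proof.
  intros _ _ hder.
  apply entails_bigAnd_bigOr, (GWFN2_valid2 _ _ hder);
    apply Forall_map, Forall_forall; intros A hA; [apply coverL_F | apply coverR_F];
    exact hA.
Qed.
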